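(* Let $y_0\in E$ and let $u$ be a positive solution of $0=\tfrac12b^2u''+\tilde au'+\eta u-u^2-d\frac{(u')^2}{u}$ on $[y_0,\infty)$ with $u(y)/\eta(y)\to1$ as $y\to\infty$. Assume that on $[y_0,\infty)$: $\eta\in C^2$, $\eta>0$, $\Psi\eta\le1$, $\tilde a\le0$, and $\bar a:=\frac{\tilde a}{\eta}+(b^2-2d)\frac{\eta'}{\eta^2}\le-C$ for some constant $C>0$; that $\Psi\eta$ is strictly increasing on $[y_0,\infty)$; and that $\eta(y)\to\infty$, $\Psi\eta(y)\to1$ and $\eta'(y)/\eta(y)\to0$ as $y\to\infty$. Then $u'(y)/u(y)\to0$ as $y\to\infty$.
   Context: $E=(E_-,\infty)$ with $E_-\in\{-\infty\}\cup\mathbb R$. $r,\lambda,\sigma,a,b,\rho,\delta:E\to\mathbb R$ are locally Lipschitz with $\sigma>0$, $b(y)\neq0$, $\rho(y)\in[-1,1]$; $R\in(0,\infty)\setminus\{1\}$. Define $\eta=\frac1R\big(\delta-(1-R)(r+\frac{\lambda^2}{2R})\big)$, $\tilde a=a+\frac{1-R}{R}\rho\lambda b$, $d=\frac12b^2((1-\rho^2)R+\rho^2+1)$, and for positive $g\in C^2$, $\Psi g=1+\frac{\frac12b^2g''+\tilde ag'}{g^2}-d\frac{(g')^2}{g^3}$. *)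

From Stdlib Require Import Reals.
From Coquelicot Require Import Coquelicot.
Open Scope R_scope.

(* The state space E = (E_-, +oo), with E_- in {-oo} \cup R (an Rbar). *)
Definition inE (Em : Rbar) (y : R) : Prop := Rbar_lt Em y.

Definition loc_lipschitz_on (P : R -> Prop) (f : R -> R) : Prop :=
  forall x, P x -> exists eps : R, 0 < eps /\ exists L : R,
    forall y z, Rabs (y - x) < eps -> Rabs (z - x) < eps ->
      Rabs (f y - f z) <= L * Rabs (y - z).

Definition eta_fun (Rr : R) (r lam delta : R -> R) (y : R) : R :=
  / Rr * (delta y - (1 - Rr) * (r y + (lam y)^2 / (2 * Rr))).

Definition atil (Rr : R) (a rho lam b : R -> R) (y : R) : R :=
  a y + (1 - Rr) / Rr * rho y * lam y * b y.

Definition dfun (Rr : R) (b rho : R -> R) (y : R) : R :=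
  / 2 * (b y)^2 * ((1 - (rho y)^2) * Rr + (rho y)^2 + 1).

Definition Psi (b atl d : R -> R) (g : R -> R) (y : R) : R :=
  1 + (/ 2 * (b y)^2 * Derive (Derive g) y + atl y * Derive g y) / (g y)^2
    - d y * (Derive g y)^2 / (g y)^3.

Definition C2_at (g : R -> R) (y : R) : Prop :=
  ex_derive g y /\ ex_derive (Derive g) y /\ continuous (Derive (Derive g)) y.

(* Write v = u'/u, w = u/eta and s = eta'/eta.  Dividing the equation by u gives the
   Riccati equation  v' = kap v^2 + beta v + q (w - 1)  with  0 <= kap <= R + 1,  q > 0  and,
   by the bound on abar,  beta >= C q - 2 kap s;  moreover  w' = w (v - s).  Far out w is
   close to 1 and s close to 0.  If v >= e at a late time, then v' > 0 wherever v >= e/2, so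
   v stays above e/2 for a unit of time and w grows by about e/8.  If v <= -e, then
   v' < 2 (R + 1) v^2 wherever v <= -e/2, so by comparison with the explicit solution of
   z' = 2 (R + 1) z^2 the function v stays below -e/2 for a time of order 1/e, during which
   w drops by a fixed amount.  Both contradict w -> 1. *)

From Stdlib Require Import Reals Lra.
From Coquelicot Require Import Coquelicot.
Open Scope R_scope.

Lemma continuous_lt_near (F : R -> R) (m c : R) :
  continuous F m -> F m < c ->
  exists del, 0 < del /\ forall x, Rabs (x - m) < del -> F x < c.
Proof.
  intros HF Hm.
  destruct (HF _ (open_lt c _ Hm)) as [[del Hdel] Hball].
  exists del; split; [exact Hdel | exact Hball].
Qed.

Lemma continuous_gt_near (F : R -> R) (m c : R) :
  continuous F m -> c < F m ->
  exists del, 0 < del /\ forall x, Rabs (x - m) < del -> c < F x.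
Proof.
  intros HF Hm.
  destruct (HF _ (open_gt c _ Hm)) as [[del Hdel] Hball].
  exists del; split; [exact Hdel | exact Hball].
Qed.

Lemma is_derive_neg_left (F : R -> R) (m l : R) :
  is_derive F m l -> l < 0 ->
  exists del, 0 < del /\ forall x, m - del < x < m -> F m < F x.
Proof.
  intros HD Hl. apply is_derive_Reals in HD.
  destruct (HD (- l) ltac:(lra)) as [[del Hdel] Hq].
  exists del; split; [exact Hdel|]. intros x Hx.
  specialize (Hq (x - m) ltac:(lra) ltac:(simpl; rewrite Rabs_left; lra)).
  replace (m + (x - m)) with x in Hq by ring.
  apply Rabs_def2 in Hq. destruct Hq as [Hq _].
  assert (Hquot : (F x - F m) / (x - m) < 0) by lra.
  assert (Hprod : (F x - F m) / (x - m) * (x - m) = F x - F m) by (field; lra).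
  nra.
Qed.

Lemma pos_left_of_nonneg (F : R -> R) (m l : R) :
  is_derive F m l -> 0 <= F m -> (0 = F m -> l < 0) ->
  exists del, 0 < del /\ forall x, m - del < x < m -> 0 < F x.
Proof.
  intros HD Hnn Hl.
  destruct (Rle_lt_or_eq_dec 0 (F m) Hnn) as [Hpos | Hzero].
  - assert (Hcont : continuous F m) by exact (ex_derive_continuous F m (ex_intro _ l HD)).
    destruct (continuous_gt_near F m 0 Hcont Hpos) as [del [Hdel Hnear]].
    exists del; split; [exact Hdel|]. intros x Hx.
    apply Hnear. rewrite Rabs_left; lra.
  - destruct (is_derive_neg_left F m l HD (Hl Hzero)) as [del [Hdel Hnear]].
    exists del; split; [exact Hdel|]. intros x Hx. rewrite Hzero. exact (Hnear x Hx).
Qed.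

Lemma negative_until_crossing (F dF : R -> R) (a b : R) :
  (forall x, a <= x <= b -> is_derive F x (dF x)) -> F a < 0 ->
  (forall x, a < x <= b -> F x = 0 -> dF x < 0) ->
  forall x, a <= x <= b -> F x < 0.
Proof.
  intros HD Ha Hz x1 Hx1.
  destruct (Rlt_or_le (F x1) 0) as [|Hx1pos]; [assumption | exfalso].
  set (E y := a <= y <= x1 /\ forall z, a <= z <= y -> F z < 0).
  assert (HEa : E a).
  { split; [lra|]. intros z Hz0. replace z with a by lra. exact Ha. }
  destruct (completeness E) as [m [Hub Hlub]].
  { exists x1. intros y [Hy _]. lra. }
  { exists a. exact HEa. }
  (* m is the supremum of the segments [a, y] on which F < 0: F m < 0 would let such a
     segment extend past m, while F m >= 0 makes F positive just left of m. *)
  assert (Ham : a <= m) by (apply Hub, HEa).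
  assert (Hmx : m <= x1) by (apply Hlub; intros y [Hy _]; lra).
  assert (Hbelow : forall z, a <= z < m -> F z < 0).
  { intros z Hz0. destruct (Rlt_or_le (F z) 0) as [|Hz']; [assumption | exfalso].
    assert (m <= z); [|lra]. apply Hlub. intros y [Hy Hy'].
    destruct (Rle_or_lt y z); [assumption|]. specialize (Hy' z ltac:(lra)). lra. }
  assert (HDm : is_derive F m (dF m)) by (apply HD; lra).
  destruct (Rlt_or_le (F m) 0) as [Hneg | Hnn].
  - assert (Hcont : continuous F m) by exact (ex_derive_continuous F m (ex_intro _ (dF m) HDm)).
    destruct (continuous_lt_near F m 0 Hcont Hneg) as [del [Hdel Hnear]].
    assert (Hmx' : m < x1) by (destruct (Req_dec m x1) as [->|]; lra).
    set (y := m + Rmin (del / 2) (x1 - m)).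
    assert (Hy1 : 0 < Rmin (del / 2) (x1 - m)) by (apply Rmin_pos; lra).
    assert (Hy2 := Rmin_l (del / 2) (x1 - m)). assert (Hy3 := Rmin_r (del / 2) (x1 - m)).
    assert (y <= m); [|unfold y in *; lra].
    apply Hub. split; [unfold y; lra|]. intros z Hz0.
    destruct (Rlt_or_le z m); [apply Hbelow; lra|].
    apply Hnear. rewrite Rabs_right; unfold y in *; lra.
  - assert (Hma : a < m) by (destruct (Req_dec a m) as [->|]; lra).
    destruct (pos_left_of_nonneg F m (dF m) HDm Hnn (fun H0 => Hz m ltac:(lra) (eq_sym H0)))
      as [del [Hdel Hnear]].
    set (h := Rmin (del / 2) (m - a)).
    assert (Hh1 : 0 < h) by (apply Rmin_pos; lra).
    assert (Hh2 := Rmin_l (del / 2) (m - a)). assert (Hh3 := Rmin_r (del / 2) (m - a)).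
    assert (Hpos := Hnear (m - h) ltac:(unfold h in *; lra)).
    assert (Hng := Hbelow (m - h) ltac:(unfold h in *; lra)).
    lra.
Qed.

Lemma mean_value (f df : R -> R) (a b : R) :
  a <= b -> (forall x, a <= x <= b -> is_derive f x (df x)) ->
  exists c, a <= c <= b /\ f b - f a = df c * (b - a).
Proof.
  intros Hab HD.
  destruct (MVT_gen f a b df) as [c [Hc Heq]];
    rewrite ?Rmin_left, ?Rmax_right in * by lra.
  - intros x Hx. apply HD. lra.
  - intros x Hx. apply continuity_pt_filterlim.
    exact (ex_derive_continuous f x (ex_intro _ (df x) (HD x Hx))).
  - exists c. split; assumption.
Qed.

Lemma below_riccati_barrier (v dv : R -> R) (B c t h : R) :
  0 < B -> 0 < c -> 0 <= h ->
  (forall x, t <= x <= t + h -> is_derive v x (dv x)) ->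
  v t < - c ->
  (forall x, t < x <= t + h -> v x = - c / (1 + B * c * (x - t)) -> dv x < B * v x ^ 2) ->
  forall x, t <= x <= t + h -> v x < - c / (1 + B * c * (x - t)).
Proof.
  intros HB Hc Hh HD Ht Hcross.
  set (z x := - c / (1 + B * c * (x - t))).
  assert (Hz : forall x, t <= x -> is_derive z x (B * z x ^ 2)).
  { intros x Hx.
    assert (0 <= B * c * (x - t)) by (apply Rmult_le_pos; [nra | lra]).
    unfold z. auto_derive; [lra|]. field. nra. }
  intros x Hx.
  assert (Hlt : v x - z x < 0); [|unfold z in Hlt; lra].
  apply (negative_until_crossing (fun x => v x - z x) (fun x => dv x - B * z x ^ 2) t (t + h));
    [| | |exact Hx].
  - intros y Hy. apply (is_derive_minus v z y); [apply HD | apply Hz]; lra.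
  - unfold z. replace (t - t) with 0 by ring. rewrite Rmult_0_r, Rplus_0_r, Rdiv_1_r. lra.
  - intros y Hy Hzero. assert (Hvz : v y = z y) by lra.
    rewrite <- Hvz. specialize (Hcross y Hy Hvz). lra.
Qed.

Section LogDerivativeDecay.

Variables (v dv w s kap beta q : R -> R) (y0 K C : R).
Hypotheses (HK : 0 < K) (HC : 0 < C).
Hypothesis v_derive : forall y, y0 <= y -> is_derive v y (dv y).
Hypothesis w_derive : forall y, y0 <= y -> is_derive w y (w y * (v y - s y)).
Hypothesis riccati : forall y, y0 <= y ->
  dv y = kap y * v y ^ 2 + beta y * v y + q y * (w y - 1).
Hypothesis kap_bounds : forall y, y0 <= y -> 0 <= kap y <= K.
Hypothesis q_pos : forall y, y0 <= y -> 0 < q y.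
Hypothesis beta_ge : forall y, y0 <= y -> C * q y - 2 * kap y * s y <= beta y.

Section Tail.

Variables (e tau t : R).
Hypotheses (He : 0 < e) (Ht : y0 <= t).
Hypotheses (tau_half : tau <= 1 / 2) (tau_Ce : tau <= C * e / 4)
  (tau_e : tau <= e / 32) (tau_K : tau <= 1 / (50 * K)).
Hypothesis w_near : forall x, t <= x -> Rabs (w x - 1) < tau.
Hypothesis s_near : forall x, t <= x -> Rabs (s x) < e / 4.

Lemma dv_pos_of_v_ge x : t <= x -> e / 2 <= v x -> 0 < dv x.
Proof.
  intros Hx Hv.
  assert (Hy : y0 <= x) by lra.
  destruct (kap_bounds x Hy) as [Hk _]. pose proof (q_pos x Hy) as Hq.
  pose proof (beta_ge x Hy) as Hb.
  destruct (Rabs_def2 _ _ (w_near x Hx)) as [_ Hw].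
  destruct (Rabs_def2 _ _ (s_near x Hx)) as [Hs _].
  assert (Hbeta : (C * q x - 2 * kap x * s x) * v x <= beta x * v x)
    by (apply Rmult_le_compat_r; lra).
  assert (Hquad : 0 <= kap x * (v x * (v x - 2 * s x)))
    by (apply Rmult_le_pos; [lra | apply Rmult_le_pos; lra]).
  assert (Hlin : q x * (C * e / 4) <= q x * (C * v x - tau)) by (apply Rmult_le_compat_l; nra).
  assert (Hgap : 0 < q x * (C * e / 4)) by (apply Rmult_lt_0_compat; nra).
  assert (Hrest : q x * (- tau) < q x * (w x - 1)) by (apply Rmult_lt_compat_l; lra).
  rewrite (riccati x Hy). nra.
Qed.

Lemma dv_lt_of_v_le x : t <= x -> v x <= - (e / 2) -> dv x < 2 * K * v x ^ 2.
Proof.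
  intros Hx Hv.
  assert (Hy : y0 <= x) by lra.
  destruct (kap_bounds x Hy) as [Hk HkK]. pose proof (q_pos x Hy) as Hq.
  pose proof (beta_ge x Hy) as Hb.
  destruct (Rabs_def2 _ _ (w_near x Hx)) as [Hw _].
  destruct (Rabs_def2 _ _ (s_near x Hx)) as [Hs1 Hs2].
  assert (Hbeta : beta x * v x <= (C * q x - 2 * kap x * s x) * v x) by nra.
  assert (Hcross : - 2 * s x * v x <= v x ^ 2) by nra.
  assert (Hquad : kap x * (v x ^ 2 - 2 * s x * v x) <= K * (2 * v x ^ 2))
    by (apply Rmult_le_compat; nra).
  assert (Hlin : q x * (C * v x + tau) <= q x * (- (C * e / 4)))
    by (apply Rmult_le_compat_l; nra).
  assert (Hgap : 0 < q x * (C * e / 4)) by (apply Rmult_lt_0_compat; nra).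
  assert (Hrest : q x * (w x - 1) < q x * tau) by (apply Rmult_lt_compat_l; lra).
  rewrite (riccati x Hy). nra.
Qed.

Lemma w_increment_small x : t <= x -> Rabs (w x - w t) < 2 * tau.
Proof.
  intros Hx.
  destruct (Rabs_def2 _ _ (w_near x Hx)) as [Hx1 Hx2].
  destruct (Rabs_def2 _ _ (w_near t (Rle_refl t))) as [Ht1 Ht2].
  apply Rabs_def1; lra.
Qed.

Lemma w_increment_ge (h c : R) :
  0 <= h -> (forall x, t <= x <= t + h -> c <= v x - s x) -> 0 <= c ->
  c / 2 * h <= w (t + h) - w t.
Proof.
  intros Hh Hvs Hc.
  destruct (mean_value w (fun y => w y * (v y - s y)) t (t + h)) as [x [Hx Heq]].
  - lra.
  - intros y Hy. apply w_derive. lra.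
  - destruct (Rabs_def2 _ _ (w_near x ltac:(lra))) as [_ Hw].
    specialize (Hvs x Hx). replace (t + h - t) with h in Heq by ring.
    rewrite Heq. apply Rmult_le_compat_r; [exact Hh|]. nra.
Qed.

Lemma w_increment_le (h c : R) :
  0 <= h -> (forall x, t <= x <= t + h -> v x - s x <= - c) -> 0 <= c ->
  w (t + h) - w t <= - (c / 2 * h).
Proof.
  intros Hh Hvs Hc.
  destruct (mean_value w (fun y => w y * (v y - s y)) t (t + h)) as [x [Hx Heq]].
  - lra.
  - intros y Hy. apply w_derive. lra.
  - destruct (Rabs_def2 _ _ (w_near x ltac:(lra))) as [_ Hw].
    specialize (Hvs x Hx). replace (t + h - t) with h in Heq by ring.
    rewrite Heq, Ropp_mult_distr_l. apply Rmult_le_compat_r; [exact Hh|]. nra.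
Qed.

Lemma v_lt_tail : v t < e.
Proof.
  destruct (Rlt_or_le (v t) e) as [|Hge]; [assumption | exfalso].
  assert (Hstay : forall x, t <= x <= t + 1 -> e / 2 - v x < 0).
  { apply (negative_until_crossing _ (fun x => - dv x)); [| lra |].
    - intros x Hx.
      assert (Hd := is_derive_minus (fun _ => e / 2) v x 0 (dv x)
                      (is_derive_const _ _) (v_derive x ltac:(lra))).
      replace (- dv x) with (minus 0 (dv x)) by (unfold minus, plus, opp; simpl; ring).
      exact Hd.
    - intros x Hx Hzero. assert (0 < dv x) by (apply dv_pos_of_v_ge; lra). lra. }
  assert (Hinc : e / 4 / 2 * 1 <= w (t + 1) - w t).
  { apply w_increment_ge; [lra | | lra].
    intros x Hx. specialize (Hstay x Hx).
    destruct (Rabs_def2 _ _ (s_near x ltac:(lra))) as [Hs _]. lra. }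
  destruct (Rabs_def2 _ _ (w_increment_small (t + 1) ltac:(lra))) as [Hw _].
  lra.
Qed.

Lemma v_gt_tail : - e < v t.
Proof.
  destruct (Rlt_or_le (- e) (v t)) as [|Hle]; [assumption | exfalso].
  (* the barrier is the solution of z' = 2K z^2, z t = -3e/4; it stays below -e/2 on [t, t + h] *)
  set (h := 1 / (3 * K * e)).
  assert (Hh : 0 < h) by (unfold h; apply Rdiv_lt_0_compat; [lra | nra]).
  assert (Hbar : forall x, t <= x <= t + h ->
            - (3 * e / 4) / (1 + 2 * K * (3 * e / 4) * (x - t)) <= - (e / 2)).
  { intros x Hx.
    assert (HKeh : 2 * K * (3 * e / 4) * h = 1 / 2) by (unfold h; field; lra).
    assert (0 <= 2 * K * (3 * e / 4) * (x - t) <= 1 / 2).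
    { rewrite <- HKeh. split; [apply Rmult_le_pos; nra | apply Rmult_le_compat_l; nra]. }
    set (D := 1 + 2 * K * (3 * e / 4) * (x - t)).
    assert (HD : 1 <= D <= 3 / 2) by (unfold D; lra).
    replace (- (3 * e / 4) / D) with (- (e / 2) * (3 / 2 / D)) by (field; lra).
    rewrite <- (Rmult_1_r (- (e / 2))) at 2.
    apply Rmult_le_compat_neg_l; [lra |].
    apply Rmult_le_reg_r with D; [lra |]. field_simplify; lra. }
  assert (Hstay : forall x, t <= x <= t + h ->
            v x < - (3 * e / 4) / (1 + 2 * K * (3 * e / 4) * (x - t))).
  { apply below_riccati_barrier with dv; [nra | lra | lra | | lra |].
    - intros x Hx. apply v_derive. lra.
    - intros x Hx Hvx. apply dv_lt_of_v_le; [lra |].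
      rewrite Hvx. apply Hbar. lra. }
  assert (Hdec : w (t + h) - w t <= - (e / 4 / 2 * h)).
  { apply w_increment_le; [lra | | lra].
    intros x Hx. specialize (Hstay x Hx). specialize (Hbar x Hx).
    destruct (Rabs_def2 _ _ (s_near x ltac:(lra))) as [_ Hs]. lra. }
  assert (Heh : e / 4 / 2 * h = 1 / (24 * K)) by (unfold h; field; lra).
  assert (Htau : 2 * tau < 1 / (24 * K)).
  { apply Rle_lt_trans with (2 * (1 / (50 * K))); [lra |].
    apply Rmult_lt_reg_r with (50 * K); [lra |]. field_simplify; lra. }
  destruct (Rabs_def2 _ _ (w_increment_small (t + h) ltac:(lra))) as [_ Hw].
  lra.
Qed.

End Tail.

Lemma is_lim_log_derivative :
  is_lim w p_infty 1 -> is_lim s p_infty 0 -> is_lim v p_infty 0.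
Proof.
  intros Hw Hs. apply is_lim_spec. intros [e He]. simpl.
  set (tau := Rmin (Rmin (1 / 2) (C * e / 4)) (Rmin (e / 32) (1 / (50 * K)))).
  assert (Htau : 0 < tau).
  { unfold tau. repeat apply Rmin_pos; try lra.
    - nra.
    - apply Rdiv_lt_0_compat; lra. }
  apply is_lim_spec in Hw, Hs.
  destruct (Hw (mkposreal tau Htau)) as [N1 HN1].
  destruct (Hs (mkposreal (e / 4) ltac:(lra))) as [N2 HN2]. simpl in HN1, HN2.
  exists (Rmax y0 (Rmax N1 N2)). intros t Ht.
  pose proof (Rmax_l y0 (Rmax N1 N2)). pose proof (Rmax_r y0 (Rmax N1 N2)).
  pose proof (Rmax_l N1 N2). pose proof (Rmax_r N1 N2).
  assert (Htau1 := Rmin_l (Rmin (1 / 2) (C * e / 4)) (Rmin (e / 32) (1 / (50 * K)))).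
  assert (Htau2 := Rmin_r (Rmin (1 / 2) (C * e / 4)) (Rmin (e / 32) (1 / (50 * K)))).
  assert (Htau3 := Rmin_l (1 / 2) (C * e / 4)). assert (Htau4 := Rmin_r (1 / 2) (C * e / 4)).
  assert (Htau5 := Rmin_l (e / 32) (1 / (50 * K))). assert (Htau6 := Rmin_r (e / 32) (1 / (50 * K))).
  fold tau in Htau1, Htau2.
  assert (w_near : forall x, t <= x -> Rabs (w x - 1) < tau) by (intros x Hx; apply HN1; lra).
  assert (s_near : forall x, t <= x -> Rabs (s x) < e / 4).
  { intros x Hx. rewrite <- (Rminus_0_r (s x)). apply HN2. lra. }
  rewrite Rminus_0_r. apply Rabs_def1.
  - apply (v_lt_tail e tau); lra || assumption.
  - apply (v_gt_tail e tau); lra || assumption.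
Qed.

End LogDerivativeDecay.

Lemma inE_le (Em : Rbar) (y0 y : R) : inE Em y0 -> y0 <= y -> inE Em y.
Proof. intros H0 Hy. exact (Rbar_lt_le_trans _ (Finite y0) (Finite y) H0 Hy). Qed.

Lemma is_derive_div_log (f g : R -> R) (y df dg : R) :
  is_derive f y df -> is_derive g y dg -> f y <> 0 -> g y <> 0 ->
  is_derive (fun x => f x / g x) y (f y / g y * (df / f y - dg / g y)).
Proof.
  intros Hf Hg Hf0 Hg0.
  replace (f y / g y * (df / f y - dg / g y)) with ((df * g y - f y * dg) / g y ^ 2)
    by (field; auto).
  exact (is_derive_div f g y df dg Hf Hg Hg0).
Qed.

Lemma is_derive_log_derivative (u : R -> R) (y : R) :
  ex_derive u y -> ex_derive (Derive u) y -> u y <> 0 ->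
  is_derive (fun x => Derive u x / u x) y
    ((Derive (Derive u) y * u y - Derive u y * Derive u y) / u y ^ 2).
Proof.
  intros H1 H2 Hu.
  exact (is_derive_div _ _ y _ _ (Derive_correct _ _ H2) (Derive_correct _ _ H1) Hu).
Qed.

Lemma log_derivative_riccati (al d atl eta u u1 u2 : R) :
  al <> 0 -> u <> 0 -> eta <> 0 ->
  0 = al * u2 + atl * u1 + eta * u - u ^ 2 - d * u1 ^ 2 / u ->
  (u2 * u - u1 * u1) / u ^ 2
  = (d / al - 1) * (u1 / u) ^ 2 + - atl / al * (u1 / u) + eta / al * (u / eta - 1).
Proof.
  intros Hal Hu Heta Hode.
  assert (Halu2 : al * u2 = - atl * u1 - eta * u + u ^ 2 + d * u1 ^ 2 / u) by lra.
  replace u2 with (al * u2 / al) by (field; exact Hal).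
  rewrite Halu2. field. auto.
Qed.

Lemma dfun_excess_bounds (Rr : R) (b rho : R -> R) (y : R) :
  0 < Rr -> -1 <= rho y <= 1 -> b y <> 0 ->
  0 <= dfun Rr b rho y / (/ 2 * b y ^ 2) - 1 <= Rr + 1.
Proof.
  intros HR Hrho Hb.
  assert (Hb2 : 0 < b y ^ 2) by (apply pow2_gt_0; exact Hb).
  replace (dfun Rr b rho y / (/ 2 * b y ^ 2) - 1) with ((1 - rho y ^ 2) * Rr + rho y ^ 2)
    by (unfold dfun; field; lra).
  assert (0 <= rho y ^ 2 <= 1) by nra.
  split; nra.
Qed.

Lemma abar_drift_bound (B d atl eta deta C : R) :
  B <> 0 -> 0 < eta ->
  atl / eta + (B ^ 2 - 2 * d) * deta / eta ^ 2 <= - C ->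
  C * (eta / (/ 2 * B ^ 2)) - 2 * (d / (/ 2 * B ^ 2) - 1) * (deta / eta)
  <= - atl / (/ 2 * B ^ 2).
Proof.
  intros HB Heta Habar.
  assert (HB2 : 0 < B ^ 2) by (apply pow2_gt_0; exact HB).
  assert (Hmul : atl + (B ^ 2 - 2 * d) * (deta / eta) <= - C * eta).
  { apply Rmult_le_compat_r with (r := eta) in Habar; [|lra].
    replace ((atl / eta + (B ^ 2 - 2 * d) * deta / eta ^ 2) * eta)
      with (atl + (B ^ 2 - 2 * d) * (deta / eta)) in Habar by (field; lra).
    lra. }
  apply Rmult_le_reg_r with (/ 2 * B ^ 2); [lra |].
  replace ((C * (eta / (/ 2 * B ^ 2)) - 2 * (d / (/ 2 * B ^ 2) - 1) * (deta / eta))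
             * (/ 2 * B ^ 2))
    with (C * eta + (B ^ 2 - 2 * d) * (deta / eta)) by (field; lra).
  replace (- atl / (/ 2 * B ^ 2) * (/ 2 * B ^ 2)) with (- atl) by (field; lra).
  lra.
Qed.

Theorem theorem4p15
  (Em : Rbar) (r lam sigma a b rho delta : R -> R) (Rr : R)
  (Hr : loc_lipschitz_on (inE Em) r) (Hlam : loc_lipschitz_on (inE Em) lam)
  (Hsig : loc_lipschitz_on (inE Em) sigma) (Ha : loc_lipschitz_on (inE Em) a)
  (Hb : loc_lipschitz_on (inE Em) b) (Hrho : loc_lipschitz_on (inE Em) rho)
  (Hdelta : loc_lipschitz_on (inE Em) delta)
  (Hsigpos : forall y, inE Em y -> 0 < sigma y)
  (Hbnz : forall y, inE Em y -> b y <> 0)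
  (Hrhob : forall y, inE Em y -> -1 <= rho y <= 1)
  (HR : 0 < Rr) (HR1 : Rr <> 1)
  (y0 : R) (Hy0 : inE Em y0) (u : R -> R) (C : R) (HC : 0 < C) :
  let eta := eta_fun Rr r lam delta in
  let atl := atil Rr a rho lam b in
  let d := dfun Rr b rho in
  (forall y, y0 <= y -> 0 < u y) ->
  (forall y, y0 <= y -> C2_at u y) ->
  (forall y, y0 <= y ->
     0 = / 2 * (b y)^2 * Derive (Derive u) y + atl y * Derive u y
         + eta y * u y - (u y)^2 - d y * (Derive u y)^2 / u y) ->
  is_lim (fun y => u y / eta y) p_infty (Finite 1) ->
  (forall y, y0 <= y -> C2_at eta y) ->
  (forall y, y0 <= y -> 0 < eta y) ->
  (forall y, y0 <= y -> Psi b atl d eta y <= 1) ->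
  (forall y, y0 <= y -> atl y <= 0) ->
  (forall y, y0 <= y ->
     atl y / eta y + ((b y)^2 - 2 * d y) * Derive eta y / (eta y)^2 <= - C) ->
  (forall y1 y2, y0 <= y1 -> y1 < y2 -> Psi b atl d eta y1 < Psi b atl d eta y2) ->
  is_lim eta p_infty p_infty ->
  is_lim (Psi b atl d eta) p_infty (Finite 1) ->
  is_lim (fun y => Derive eta y / eta y) p_infty (Finite 0) ->
  is_lim (fun y => Derive u y / u y) p_infty (Finite 0).
Proof.
  intros eta atl d Hupos HC2u Hode Hw HC2eta Hetapos _ _ Habar _ _ _ Hs.
  assert (HE : forall y, y0 <= y -> inE Em y) by (intros y; apply inE_le, Hy0).
  set (al y := / 2 * b y ^ 2).
  assert (Hal : forall y, y0 <= y -> 0 < al y).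
  { intros y Hy. unfold al. pose proof (pow2_gt_0 _ (Hbnz y (HE y Hy))). lra. }
  apply (is_lim_log_derivative _
    (fun y => (Derive (Derive u) y * u y - Derive u y * Derive u y) / u y ^ 2)
    (fun y => u y / eta y) (fun y => Derive eta y / eta y)
    (fun y => d y / al y - 1) (fun y => - atl y / al y) (fun y => eta y / al y)
    y0 (Rr + 1) C); try assumption; try lra; intros y Hy.
  - destruct (HC2u y Hy) as [H1 [H2 _]].
    apply is_derive_log_derivative; [exact H1 | exact H2 | apply Rgt_not_eq, Hupos, Hy].
  - destruct (HC2u y Hy) as [H1 _]. destruct (HC2eta y Hy) as [H2 _].
    apply is_derive_div_log; try apply Derive_correct; try assumption.
    + apply Rgt_not_eq, Hupos, Hy.
    + apply Rgt_not_eq, Hetapos, Hy.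
  - apply log_derivative_riccati; [apply Rgt_not_eq, Hal, Hy | apply Rgt_not_eq, Hupos, Hy
      | apply Rgt_not_eq, Hetapos, Hy | apply Hode, Hy].
  - apply dfun_excess_bounds; [exact HR | apply Hrhob, HE, Hy | apply Hbnz, HE, Hy].
  - apply Rdiv_lt_0_compat; [apply Hetapos | apply Hal]; exact Hy.
  - apply abar_drift_bound; [apply Hbnz, HE, Hy | apply Hetapos, Hy | apply Habar, Hy].
Qed.
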